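(* Let $\mathbb{K}\in\{\mathbb{R},\mathbb{C}\}$. Let $S_1,\dots,S_M$ be non-trivial, independent linear subspaces of $\mathbb{K}^m$ with dimensions $d_1,\dots,d_M$, let $d_{\max}=\max_i d_i$ and $\mathcal{U}=\bigcup_{i=1}^M S_i$. Let $\mathbf{W}=[w_1\cdots w_n]\in\mathbb{K}^{m\times n}$ be a rank $r$ matrix whose columns are drawn from $\mathcal{U}$, such that the columns drawn from each $S_i$ form a generic set for $S_i$. Let $I\subset\{1,\dots,m\}$, $J\subset\{1,\dots,n\}$ with $|I|=s$, $|J|=k$, let $C\in\mathbb{K}^{m\times k}$ consist of the columns of $\mathbf{W}$ indexed by $J$, $R\in\mathbb{K}^{s\times n}$ of the rows of $\mathbf{W}$ indexed by $I$, and $U\in\mathbb{K}^{s\times k}$ the submatrix of $\mathbf{W}$ indexed by $I\times J$, and assume $\operatorname{rank}(U)=r$ (so that $\mathbf{W}=CU^\dagger R$). Let $Y=U^\dagger R$ and let $Q$ be either $\mathrm{bin}(Y^*Y)$ or $\mathrm{abs}(Y^*Y)$. Then $\Xi_{\mathbf{W}}=Q^{d_{\max}}$ is a similarity matrix for $\mathbf{W}$.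
   Context: Subspaces $S_1,\dots,S_M$ of $\mathbb{K}^m$ are independent if $\dim(S_1+\dots+S_M)=\dim S_1+\dots+\dim S_M\le m$. A set of data $\mathbf{W}$ drawn from a subspace $S$ of dimension $d$ is generic if it has more than $d$ elements and every $d$ vectors from it form a basis of $S$. For a matrix $A$, $\mathrm{abs}(A)(i,j)=|A(i,j)|$ and $\mathrm{bin}(A)(i,j)=1$ if $A(i,j)\neq 0$ and $0$ otherwise. A matrix $\Xi$ is a similarity matrix for $\mathbf{W}$ (whose columns lie in $\mathcal{U}$) if $\Xi$ is symmetric and $\Xi(i,j)\neq 0$ if and only if $w_i$ and $w_j$ come from the same subspace $S_l$. $U^\dagger$ is the Moore--Penrose pseudoinverse; $Q^{d_{\max}}$ is the ordinary matrix power. *)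

From HB Require Import structures.
From mathcomp Require Import all_boot all_order all_algebra.
Set Implicit Arguments. Unset Strict Implicit. Unset Printing Implicit Defensive.
Import Order.TTheory GRing.Theory Num.Theory.
Local Open Scope ring_scope.

Section Defs.
Variables (K : numFieldType) (conjf : K -> K).

(* conjugate transpose A^* (conjf = identity for K = R, complex conjugation for K = C) *)
Definition adjmx p q (A : 'M[K]_(p, q)) : 'M[K]_(q, p) := map_mx conjf A^T.

Definition is_MP_pinv p q (A : 'M[K]_(p, q)) (X : 'M[K]_(q, p)) : Prop :=
  [/\ A *m X *m A = A, X *m A *m X = X,
      adjmx (A *m X) = A *m X & adjmx (X *m A) = X *m A].

Definition abs_mx p q (A : 'M[K]_(p, q)) : 'M[K]_(p, q) := map_mx (fun x => `|x|) A.
Definition bin_mx p q (A : 'M[K]_(p, q)) : 'M[K]_(p, q) :=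
  map_mx (fun x => (x != 0)%:R) A.

Definition independent_subspaces m M (S : 'I_M -> {vspace 'cV[K]_m}) : Prop :=
  (\dim (\sum_(i < M) S i)%VS = \sum_(i < M) \dim (S i))%N.

Definition generic_columns m n (W : 'M[K]_(m, n)) (Sp : {vspace 'cV[K]_m}) : Prop :=
  let Jc := [set j : 'I_n | col j W \in Sp] in
  (\dim Sp < #|Jc|)%N /\
  forall A : {set 'I_n}, A \subset Jc -> #|A| = \dim Sp ->
    basis_of Sp [seq col j W | j in A].

Definition similarity_matrix m n M (S : 'I_M -> {vspace 'cV[K]_m})
    (W : 'M[K]_(m, n)) (Xi : 'M[K]_n) : Prop :=
  Xi^T = Xi /\
  forall i j : 'I_n,
    Xi i j != 0 <-> exists l : 'I_M, col i W \in S l /\ col j W \in S l.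

Definition theorem2_body : Prop :=
  forall (m n M : nat) (S : 'I_M -> {vspace 'cV[K]_m}) (W : 'M[K]_(m, n))
         (r s k : nat) (rI : 'I_s -> 'I_m) (cJ : 'I_k -> 'I_n),
    (forall i, S i != 0%VS) ->
    independent_subspaces S ->
    \rank W = r ->
    (forall j : 'I_n, exists i : 'I_M, col j W \in S i) ->
    (forall i, generic_columns W (S i)) ->
    injective rI -> injective cJ ->
    let C := colsub cJ W in
    let R := rowsub rI W in
    let U := mxsub rI cJ W in
    \rank U = r ->
    forall Udag : 'M[K]_(k, s), is_MP_pinv U Udag ->
    let Y := Udag *m R in
    let dmax := (\max_(i < M) \dim (S i))%N in
    forall Q : 'M[K]_n,
      Q = bin_mx (adjmx Y *m Y) \/ Q = abs_mx (adjmx Y *m Y) ->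
      similarity_matrix S W (Q ^+ dmax).

End Defs.

From HB Require Import structures.
From mathcomp Require Import all_boot all_order all_algebra.
Set Implicit Arguments. Unset Strict Implicit. Unset Printing Implicit Defensive.
Import Order.TTheory GRing.Theory Num.Theory.
Local Open Scope ring_scope.

(* Since rank U = rank W, the skeleton identity gives W = C Y with Y = U^+ R,
   and P = U^+ U is a Hermitian projection that fixes the columns y_j of Y and
   vanishes on the kernel of C. Splitting y_j along the subspaces containing
   the columns of C, independence shows that y_j vanishes on the columns of C
   not drawn from the subspace of w_j; hence the Gram matrix Y^* Y, and with it
   Q, has no entry linking two different subspaces, while its diagonal is
   nonzero because w_j = C y_j <> 0.
   Inside one subspace S of dimension d, genericity rules out orthogonality:
   if y_u is orthogonal to y_v for every u in a part A of a d-element basis D,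
   and to y_x for every x in D \ A, then w_v lies in the span of D \ A, so
   replacing some a in A by v would not yield a basis. Therefore the graph of
   nonzero entries of Q on the columns from S is connected and dominated by
   any d of its vertices. As Q is nonnegative with nonzero diagonal, the
   support of row i of Q^t is the t-step neighbourhood of i; it grows until it
   has d vertices or fills the block, and one more step then fills the block,
   so Q^d_max has exactly the required support. *)

Lemma exists_subset_card (T : finType) (A B : {set T}) k :
  A \subset B -> (#|A| <= k <= #|B|)%N ->
  exists D : {set T}, [/\ A \subset D, D \subset B & #|D| = k].
Proof.
move=> sAB /andP[leAk]; have [t ->] : exists t, k = (#|A| + t)%N.
  by exists (k - #|A|)%N; rewrite subnKC.
elim: t A sAB {leAk} => [|t IHt] A sAB leAB.
  by exists A; rewrite addn0.
have /subsetPn[x xB xNA] : ~~ (B \subset A).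
  apply: contraTN leAB => /subset_leq_card leBA.
  by rewrite -ltnNge (leq_ltn_trans leBA) // -addSnnS leq_addr.
have cardxA : #|x |: A| = #|A|.+1 by rewrite cardsU1 xNA.
have sxAB : x |: A \subset B by rewrite subUset sub1set xB.
have [|D [sxAD sDB cardD]] := IHt _ sxAB; first by rewrite cardxA addSn -addnS.
exists D; split=> //; first exact: subset_trans (subsetUr _ _) sxAD.
by rewrite cardD cardxA addSn -addnS.
Qed.

Section FamilySpan.
Variables (F : fieldType) (vT : vectType F) (n : nat) (w : 'I_n -> vT).

Definition fspan (X : {set 'I_n}) : {vspace vT} := (\sum_(j in X) <[w j]>)%VS.

Lemma memv_fspan (X : {set 'I_n}) j : j \in X -> w j \in fspan X.
Proof. by move=> Xj; rewrite memvE (sumv_sup j) // -memvE memv_line. Qed.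

Lemma fspanS (X Y : {set 'I_n}) : X \subset Y -> (fspan X <= fspan Y)%VS.
Proof.
by move=> sXY; apply/subv_sumP=> j Xj; rewrite -memvE memv_fspan ?(subsetP sXY).
Qed.

Lemma dim_fspan (X : {set 'I_n}) : (\dim (fspan X) <= #|X|)%N.
Proof.
rewrite (leq_trans (dimv_leq_sum _ _ _)) // -sum1_card leq_sum // => j _.
by rewrite dim_vline leq_b1.
Qed.

Lemma fspan_basis V (D : {set 'I_n}) :
  basis_of V [seq w j | j in D] -> fspan D = V.
Proof. by case/andP=> /eqP <- _; rewrite span_def big_map big_enum. Qed.

Lemma basis_notin_fspan V (D : {set 'I_n}) a :
  basis_of V [seq w j | j in D] -> a \in D -> w a \notin fspan (D :\ a).
Proof.
move=> basD Da; apply/negP=> waD.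
have sVD : (V <= fspan (D :\ a))%VS.
  rewrite -(fspan_basis basD) /fspan (bigD1 a) //= subv_add -memvE waD.
  by apply/subv_sumP=> j /andP[Dj ja]; rewrite -memvE memv_fspan // !inE ja.
have leVDa : (\dim V <= #|D :\ a|)%N := leq_trans (dimvS sVD) (dim_fspan _).
have ltDaV : (#|D :\ a| < \dim V)%N.
  move: basD; rewrite basisEdim size_image => /andP[_]; apply: leq_trans.
  by rewrite (cardsD1 a D) Da.
by rewrite leqNgt ltDaV in leVDa.
Qed.

End FamilySpan.

Section DirectSum.
Variables (F : fieldType) (vT : vectType F).
Variables (I : finType) (Us : I -> {vspace vT}).
Hypothesis dirUs : directv (\sum_i Us i).

Lemma directv_sum_mem_eq0 (us : I -> vT) a b :
  (forall i, us i \in Us i) -> \sum_i us i \in Us a -> b != a -> us b = 0.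
Proof.
move=> Uus sumUa ba.
pose vs i := us i - (if i == a then \sum_j us j else 0).
have Uvs i : true -> vs i \in Us i.
  by move=> _; rewrite memvB ?Uus //; case: eqP => [->|_]; rewrite ?mem0v.
have sum_vs : \sum_i vs i = 0.
  by rewrite sumrB -big_mkcond big_pred1_eq subrr.
have := directv_sum_independent dirUs vs Uvs sum_vs b isT.
by rewrite /vs (negPf ba) subr0.
Qed.

End DirectSum.

Lemma cur_decomposition (F : fieldType) m n s k (W : 'M[F]_(m, n))
    (P : 'M_(s, m)) (Q : 'M_(n, k)) (X : 'M_(k, s)) :
  \rank (P *m W *m Q) = \rank W ->
  P *m W *m Q *m X *m (P *m W *m Q) = P *m W *m Q ->
  W *m Q *m X *m (P *m W) = W.
Proof.
move=> rU UXU.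
have rPW : \rank (P *m W) = \rank W.
  by apply/eqP; rewrite eqn_leq mxrankM_maxr -{1}rU mxrankM_maxl.
have rWQ : \rank (W *m Q) = \rank W.
  by apply/eqP; rewrite eqn_leq mxrankM_maxl -{1}rU -mulmxA mxrankM_maxr.
have /submxP[A WA] : (W <= P *m W)%MS.
  by rewrite -(mxrank_leqif_sup (submxMl P W)).2 rPW.
have /submxP[B WTB] : (W^T <= (W *m Q)^T)%MS.
  rewrite -(mxrank_leqif_sup _).2 ?trmx_mul ?submxMl //.
  by rewrite -trmx_mul !mxrank_tr rWQ.
have WB : W = W *m Q *m B^T by apply: trmx_inj; rewrite WTB [RHS]trmx_mul trmxK.
have WQ : W *m Q = A *m (P *m W *m Q) by rewrite {1}WA !mulmxA.
have PW : P *m W = P *m W *m Q *m B^T by rewrite {1}WB !mulmxA.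
set U := P *m W *m Q in UXU WQ PW.
by rewrite WQ PW mulmxA -!(mulmxA A) UXU -PW -WA.
Qed.

Lemma trmxX (R : comPzSemiRingType) n (A : 'M[R]_n) t : (A ^+ t)^T = A^T ^+ t.
Proof.
elim: t => [|t IHt]; first by rewrite !expr0 trmx1.
by rewrite exprS exprSr -!mulmxE trmx_mul IHt.
Qed.

Lemma expmx_block (R : pzSemiRingType) (T : eqType) n (Q : 'M[R]_n)
    (lab : 'I_n -> T) :
  (forall u x, lab u != lab x -> Q u x = 0) ->
  forall t i j, lab i != lab j -> (Q ^+ t) i j = 0.
Proof.
move=> Qblock; elim=> [|t IHt] i j labij.
  rewrite expr0 mxE; have [ij | //] := eqVneq i j.
  by rewrite ij eqxx in labij.
rewrite exprSr -mulmxE mxE big1 // => u _.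
have [labiu|/IHt->] := eqVneq (lab i) (lab u); last by rewrite mul0r.
by rewrite Qblock ?mulr0 // -labiu.
Qed.

Section NonnegativeMatrixPowers.
Variables (R : numDomainType) (n : nat) (Q : 'M[R]_n).
Hypothesis Q_ge0 : forall i j, 0 <= Q i j.

Lemma expmx_ge0 t i j : 0 <= (Q ^+ t) i j.
Proof.
elim: t i j => [|t IHt] i j; first by rewrite expr0 mxE ler0n.
by rewrite exprSr -mulmxE mxE sumr_ge0 // => u _; rewrite mulr_ge0.
Qed.

Lemma expmxS_neq0 t i u j :
  (Q ^+ t) i u != 0 -> Q u j != 0 -> (Q ^+ t.+1) i j != 0.
Proof.
move=> Qtiu Quj; have Qiuj : 0 < (Q ^+ t) i u * Q u j.
  by rewrite mulr_gt0 // lt0r ?Qtiu ?Quj ?expmx_ge0 ?Q_ge0.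
rewrite exprSr -mulmxE mxE (bigD1 u) //= lt0r_neq0 // (lt_le_trans Qiuj) //.
by rewrite lerDl sumr_ge0 // => v _; rewrite mulr_ge0 ?expmx_ge0.
Qed.

Hypothesis Q_diag : forall i, Q i i != 0.

Lemma expmx_neq0_mono t t' i j :
  (t <= t')%N -> (Q ^+ t) i j != 0 -> (Q ^+ t') i j != 0.
Proof.
move=> /subnK <-; elim: (t' - t)%N => // s IHs Qt.
by rewrite addSn (expmxS_neq0 (IHs Qt)).
Qed.

Lemma expmx_neq0_cluster (cl : {set 'I_n}) d :
  (forall A : {set 'I_n}, A \subset cl -> (d <= #|A|)%N ->
     forall x, x \in cl :\: A -> exists2 u, u \in A & Q u x != 0) ->
  (forall A : {set 'I_n}, A != set0 -> A \proper cl ->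
     exists2 u, u \in A & exists2 x, x \in cl :\: A & Q u x != 0) ->
  {in cl &, forall i j, (Q ^+ d) i j != 0}.
Proof.
move=> dominating connected i j cli clj.
pose N t := cl :&: [set x | (Q ^+ t) i x != 0].
have N_sub t : N t \subset cl by apply: subsetIl.
have N_mono t : N t \subset N t.+1.
  by apply/subsetP=> x; rewrite !inE => /andP[-> /expmx_neq0_mono->].
have N_grow t : N t = cl \/ (t < #|N t|)%N.
  elim: t => [|t IHt].
    right; apply/card_gt0P; exists i.
    by rewrite !inE cli expr0 mxE eqxx oner_eq0.
  have [Ncl|Nncl] := eqVneq (N t) cl.
    by left; apply/eqP; rewrite eqEsubset N_sub -{1}Ncl N_mono.
  have ltN : (t < #|N t|)%N by case: IHt => // /eqP; rewrite (negPf Nncl).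
  have N0 : N t != set0 by rewrite -card_gt0 (leq_ltn_trans _ ltN).
  have Npcl : N t \proper cl by rewrite properEneq Nncl N_sub.
  have [u Ntu [x /setDP[clx Ntx] Qux]] := connected _ N0 Npcl.
  right; apply: leq_ltn_trans ltN _; apply: proper_card; rewrite properE N_mono.
  apply/subsetPn; exists x => //; rewrite !inE clx.
  by move: Ntu; rewrite !inE => /andP[_ /expmxS_neq0]; apply.
case: d dominating => [|d] dominating.
  have [|u] := dominating set0 (sub0set _) isT j; first by rewrite setD0.
  by rewrite inE.
have [Ndj|Ndj] := boolP (j \in N d).
  by move: Ndj; rewrite !inE => /andP[_ /expmx_neq0_mono->].
have ltN : (d < #|N d|)%N by case: (N_grow d) => // Ncl; rewrite Ncl clj in Ndj.
have clNj : j \in cl :\: N d by rewrite in_setD Ndj clj.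
have [u Ndu Quj] := dominating _ (N_sub d) ltN j clNj.
by move: Ndu; rewrite !inE => /andP[_ /expmxS_neq0]; apply.
Qed.

End NonnegativeMatrixPowers.

Lemma col_mulmx (R : pzSemiRingType) m n p (A : 'M[R]_(m, n)) (B : 'M_(n, p)) j :
  col j (A *m B) = A *m col j B.
Proof. by rewrite !colE mulmxA. Qed.

Lemma mulmx_col_sum (R : comPzSemiRingType) m k (A : 'M[R]_(m, k)) (v : 'cV_k) :
  A *m v = \sum_j v j 0 *: col j A.
Proof.
apply/matrixP=> i i0; rewrite !mxE summxE; apply: eq_bigr => j _.
by rewrite !mxE (ord1 i0) mulrC.
Qed.

Section Conjugation.
Variables (K : numFieldType) (conjf : K -> K).
Hypotheses (conjD : {morph conjf : x y / x + y}).
Hypotheses (conjM : {morph conjf : x y / x * y}) (conjK : involutive conjf).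
Hypothesis conj_mul_ge0 : forall x, 0 <= conjf x * x.
Hypothesis conj_mul_eq0 : forall x, conjf x * x = 0 -> x = 0.

Lemma conj0 : conjf 0 = 0.
Proof. by apply: (@addrI _ (conjf 0)); rewrite -conjD !addr0. Qed.

Lemma conj_sum (I : Type) (r : seq I) (P : pred I) (F : I -> K) :
  conjf (\sum_(i <- r | P i) F i) = \sum_(i <- r | P i) conjf (F i).
Proof. exact: (big_morph conjf conjD conj0). Qed.

Lemma conj_eq0 x : (conjf x == 0) = (x == 0).
Proof. by apply/eqP/eqP=> [x0|->]; rewrite ?conj0 // -[x]conjK x0 conj0. Qed.

Definition dotc k (u v : 'cV[K]_k) := \sum_q conjf (u q 0) * v q 0.

Lemma dotcC k (u v : 'cV[K]_k) : dotc v u = conjf (dotc u v).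
Proof.
by rewrite /dotc conj_sum; apply: eq_bigr => q _; rewrite conjM conjK mulrC.
Qed.

Lemma dotc_eq0 k (u : 'cV[K]_k) : dotc u u = 0 -> u = 0.
Proof.
move=> uu0; apply/matrixP=> q i; rewrite (ord1 i) mxE.
exact/conj_mul_eq0/(psumr_eq0P (fun q _ => conj_mul_ge0 (u q 0)) uu0).
Qed.

Lemma dotc_adjmx p k (A : 'M[K]_(p, k)) (z : 'cV[K]_p) (u : 'cV[K]_k) :
  dotc z (A *m u) = dotc (adjmx conjf A *m z) u.
Proof.
rewrite /dotc; under eq_bigr do rewrite mxE mulr_sumr.
rewrite exchange_big; apply: eq_bigr => q _.
rewrite mxE conj_sum mulr_suml; apply: eq_bigr => i _.
by rewrite !mxE conjM conjK mulrA [conjf _ * _]mulrC.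
Qed.

Lemma dotcBr k (u v1 v2 : 'cV[K]_k) : dotc u (v1 - v2) = dotc u v1 - dotc u v2.
Proof. by rewrite /dotc -sumrB; apply: eq_bigr => q _; rewrite !mxE mulrBr. Qed.

Lemma dotc_sumr k (I : finType) (X : {set I}) (a : I -> K)
    (v : I -> 'cV[K]_k) u :
  dotc u (\sum_(j in X) a j *: v j) = \sum_(j in X) a j * dotc u (v j).
Proof.
rewrite /dotc; under eq_bigr do rewrite summxE mulr_sumr.
rewrite exchange_big; apply: eq_bigr => j _; rewrite mulr_sumr.
by apply: eq_bigr => q _; rewrite !mxE mulrCA.
Qed.

Lemma dotc_suml k (I : finType) (X : {set I}) (a : I -> K)
    (v : I -> 'cV[K]_k) u :
  dotc (\sum_(j in X) a j *: v j) u = \sum_(j in X) conjf (a j) * dotc (v j) u.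
Proof.
rewrite /dotc; under eq_bigr do rewrite summxE conj_sum mulr_suml.
rewrite exchange_big; apply: eq_bigr => j _; rewrite mulr_sumr.
by apply: eq_bigr => q _; rewrite !mxE conjM mulrA.
Qed.

Hypothesis norm_conj : forall x, `|conjf x| = `|x|.

Lemma gram_bin_abs k n (Y : 'M[K]_(k, n)) (Q : 'M[K]_n) :
  Q = bin_mx (adjmx conjf Y *m Y) \/ Q = abs_mx (adjmx conjf Y *m Y) ->
  [/\ forall i j, 0 <= Q i j, Q^T = Q &
      forall i j, (Q i j == 0) = (dotc (col i Y) (col j Y) == 0)].
Proof.
have -> : adjmx conjf Y *m Y = \matrix_(i, j) dotc (col i Y) (col j Y).
  by apply/matrixP=> i j; rewrite !mxE; apply: eq_bigr => q _; rewrite !mxE.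
case=> ->; split=> [i j||i j]; rewrite ?mxE ?ler0n ?normr_ge0 //.
- by apply/matrixP=> i j; rewrite !mxE dotcC conj_eq0.
- by case: (dotc _ _ == 0); rewrite ?eqxx ?oner_eq0.
- by apply/matrixP=> i j; rewrite !mxE dotcC norm_conj.
- by rewrite normr_eq0.
Qed.


Section Support.
Variables (M m k : nat) (S : 'I_M -> {vspace 'cV[K]_m}).
Hypothesis dirS : directv (\sum_l S l).
Variables (C : 'M[K]_(m, k)) (f : 'I_k -> 'I_M) (P : 'M[K]_k).
Hypotheses (C_in_Sf : forall q, col q C \in S (f q)) (P_adj : adjmx conjf P = P).
Hypothesis kerCP : forall z : 'cV[K]_k, C *m z = 0 -> P *m z = 0.

Lemma fixed_vector_support (x : 'cV[K]_k) b :
  P *m x = x -> C *m x \in S b -> forall q, f q != b -> x q 0 = 0.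
Proof.
move=> Px CxS q fqb.
(* z c restricts x to the coordinates labelled c; C z c = 0 for c != b, so
   0 = <P z c, x> = <z c, P x> = <z c, x>, the sum of the |x q'|^2 with
   f q' = c. *)
pose z c : 'cV[K]_k := \col_q' (if c == f q' then x q' 0 else 0).
have CzS c : C *m z c \in S c.
  rewrite mulmx_col_sum memv_suml // => q' _; rewrite mxE.
  by case: eqP => [->|_]; rewrite ?scale0r ?mem0v ?memvZ.
have sum_z : \sum_c z c = x.
  apply/matrixP=> q' i; rewrite (ord1 i) summxE.
  by under eq_bigr do rewrite mxE; rewrite -big_mkcond big_pred1_eq.
have Cz0 : C *m z (f q) = 0.
  by apply: (directv_sum_mem_eq0 dirS CzS _ fqb); rewrite -mulmx_sumr sum_z.
have zx0 : dotc (z (f q)) x = 0.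
  rewrite -Px dotc_adjmx P_adj kerCP // /dotc big1 // => q' _.
  by rewrite mxE conj0 mul0r.
have zx_ge0 q' : true -> 0 <= conjf (z (f q) q' 0) * x q' 0.
  by rewrite /z mxE; case: eqP; rewrite ?conj0 ?mul0r.
apply: conj_mul_eq0; have := psumr_eq0P zx_ge0 zx0 (i := q) isT.
by rewrite /z mxE eqxx.
Qed.

End Support.

Section GenericCluster.
Variables (m n k : nat) (W : 'M[K]_(m, n)) (Y : 'M[K]_(k, n)).
Variables (C : 'M[K]_(m, k)) (L : 'M[K]_(k, m)).
Hypotheses (CY : C *m Y = W) (LW : L *m W = Y).
Variable V : {vspace 'cV[K]_m}.
Hypotheses (V_neq0 : V != 0%VS) (genV : generic_columns W V).
Local Notation cl := [set j | col j W \in V].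

Lemma generic_col_neq0 j : j \in cl -> col j W != 0.
Proof.
move=> clj; have [ltVcl basis_gen] := genV.
have [D [sjD sDcl cardD]] :
    exists D : {set 'I_n}, [/\ [set j] \subset D, D \subset cl & #|D| = \dim V].
  apply: exists_subset_card; first by rewrite sub1set.
  by rewrite cards1 lt0n dimv_eq0 V_neq0 ltnW.
apply: free_not0 (basis_free (basis_gen _ sDcl cardD)) _.
by apply: image_f; rewrite -sub1set.
Qed.

Lemma orthogonal_fspan (D A : {set 'I_n}) v :
  basis_of V [seq col j W | j in D] -> col v W \in V -> A \subset D ->
  (forall u, u \in A -> dotc (col u Y) (col v Y) = 0) ->
  (forall u x, u \in A -> x \in D :\: A -> dotc (col u Y) (col x Y) = 0) ->
  col v W \in fspan (fun j => col j W) (D :\: A).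
Proof.
move=> basD Vv sAD Av ADA.
have colC j : C *m col j Y = col j W by rewrite -col_mulmx CY.
have colL j : L *m col j W = col j Y by rewrite -col_mulmx LW.
move: Vv; rewrite -(fspan_basis basD) => /memv_sumP[vs vs_line vE].
have /fin_all_exists[a vsE] :
    forall j, exists a : K, j \in D -> vs j = a *: col j W.
  move=> j; case: (boolP (j \in D)) => Dj; last by exists 0.
  by have /vlineP[a ->] := vs_line j Dj; exists a.
have yvE : col v Y = \sum_(j in D) a j *: col j Y.
  rewrite -colL vE mulmx_sumr; apply: eq_bigr => j Dj.
  by rewrite vsE // -scalemxAr colL.
rewrite (big_setID A) /= (setIidPr sAD) in yvE.
set yA := \sum_(j in A) _ in yvE; set yDA := \sum_(j in D :\: A) _ in yvE.
have yA_orth z : (forall u, u \in A -> dotc (col u Y) z = 0) -> dotc yA z = 0.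
  by move=> Az; rewrite dotc_suml big1 // => u Au; rewrite Az // mulr0.
have yA0 : yA = 0.
  have yAE : yA = col v Y - yDA by rewrite yvE addrK.
  apply: dotc_eq0; rewrite {2}yAE dotcBr !yA_orth ?subr0 // => u Au.
  by rewrite dotc_sumr big1 // => x DAx; rewrite ADA ?mulr0.
have -> : col v W = \sum_(j in D :\: A) a j *: col j W.
  rewrite -colC yvE yA0 add0r mulmx_sumr; apply: eq_bigr => j _.
  by rewrite -scalemxAr colC.
by apply: memv_suml => j DAj; rewrite memvZ // memv_fspan.
Qed.

Lemma generic_no_orthogonal_split (D A : {set 'I_n}) a v :
  D \subset cl -> #|D| = \dim V -> v \in cl :\: D -> a \in A -> A \subset D ->
  (forall u, u \in A -> dotc (col u Y) (col v Y) = 0) ->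
  (forall u x, u \in A -> x \in D :\: A -> dotc (col u Y) (col x Y) = 0) ->
  False.
Proof.
move=> sDcl cardD /setDP[clv Dv] Aa sAD Av ADA.
have [_ basis_gen] := genV.
have Vv : col v W \in V by rewrite inE in clv.
have vDA := orthogonal_fspan (basis_gen _ sDcl cardD) Vv sAD Av ADA.
have Da : a \in D := subsetP sAD a Aa.
(* replacing a by v in D gives a d-subset of cl, hence a basis, that does not
   span col v W *)
have Dav : v \notin D :\ a by rewrite in_setD1 (negPf Dv) andbF.
have sD'cl : v |: (D :\ a) \subset cl.
  by rewrite subUset sub1set clv (subset_trans (subD1set D a)).
have cardD' : #|v |: (D :\ a)| = \dim V.
  by rewrite cardsU1 Dav -cardD (cardsD1 a D) Da.
have := basis_notin_fspan (basis_gen _ sD'cl cardD') (setU11 v _).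
rewrite setU1K // => /negP; apply; apply: subvP vDA.
by rewrite fspanS // setDS // sub1set.
Qed.

Lemma generic_dominating (A : {set 'I_n}) x :
  A \subset cl -> (\dim V <= #|A|)%N -> x \in cl :\: A ->
  exists2 u, u \in A & dotc (col u Y) (col x Y) != 0.
Proof.
move=> sAcl leVA /setDP[clx Ax].
have [D [_ sDA cardD]] :
    exists D : {set 'I_n}, [/\ set0 \subset D, D \subset A & #|D| = \dim V].
  by apply: exists_subset_card; rewrite ?sub0set ?cards0.
have /card_gt0P[a Da] : (0 < #|D|)%N by rewrite cardD lt0n dimv_eq0.
apply/exists_inP; apply: contraT; rewrite negb_exists_in => /forall_inP Aorth.
exfalso; have sDcl := subset_trans sDA sAcl.
apply: (generic_no_orthogonal_split (v := x) sDcl cardD _ Da).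
- by rewrite in_setD clx andbT; apply: contra Ax; apply: (subsetP sDA).
- exact: subxx.
- by move=> u Du; apply/eqP/negbNE/Aorth/(subsetP sDA).
- by move=> u y _; rewrite setDv inE.
Qed.

Lemma generic_connected (A : {set 'I_n}) :
  A != set0 -> A \proper cl ->
  exists2 u, u \in A & exists2 x, x \in cl :\: A & dotc (col u Y) (col x Y) != 0.
Proof.
move=> /set0Pn[a Aa] /andP[sAcl /subsetPn[v clv Av]].
have clAv : v \in cl :\: A by rewrite in_setD Av.
have [leVA|ltAV] := leqP (\dim V) #|A|.
  have [u Au uv] := generic_dominating sAcl leVA clAv.
  by exists u => //; exists v.
case: (boolP [exists u in A,
               [exists x in cl :\: A, dotc (col u Y) (col x Y) != 0]]).
  by case/exists_inP=> u Au /exists_inP[x clAx ux]; exists u => //; exists x.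
rewrite negb_exists_in => /forall_inP Aorth.
have orth u x : u \in A -> x \in cl :\: A -> dotc (col u Y) (col x Y) = 0.
  move=> Au clAx; move/Aorth: Au; rewrite negb_exists_in.
  by move/forall_inP/(_ x clAx)/negbNE/eqP.
have [ltVcl _] := genV.
have [D [sAD sDclv cardD]] :
    exists D : {set 'I_n}, [/\ A \subset D, D \subset cl :\ v & #|D| = \dim V].
  apply: exists_subset_card.
    by apply/subsetP=> x Ax; rewrite in_setD1 (subsetP sAcl) // andbT;
       apply: contraNneq Av => <-.
  by rewrite (ltnW ltAV) -ltnS (leq_trans ltVcl) // (cardsD1 v cl) clv.
exfalso; apply: (generic_no_orthogonal_split (v := v) _ cardD _ Aa sAD).
- exact: subset_trans sDclv (subD1set cl v).
- rewrite in_setD clv andbT; apply/negP=> /(subsetP sDclv).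
  by rewrite in_setD1 eqxx.
- by move=> u Au; apply: orth.
- move=> u x Au /setDP[Dx Ax]; apply: orth => //.
  by rewrite in_setD Ax; move/(subsetP sDclv): Dx; rewrite in_setD1 => /andP[].
Qed.

End GenericCluster.

Section Similarity.
Variables (M m n k : nat) (S : 'I_M -> {vspace 'cV[K]_m}) (W : 'M[K]_(m, n)).
Hypotheses (S_neq0 : forall l, S l != 0%VS) (dirS : directv (\sum_l S l)).
Hypothesis W_in_S : forall j, exists l, col j W \in S l.
Hypothesis genS : forall l, generic_columns W (S l).
Variables (Y : 'M[K]_(k, n)) (C : 'M[K]_(m, k)) (L : 'M[K]_(k, m)) (P : 'M[K]_k).
Hypotheses (CY : C *m Y = W) (LW : L *m W = Y).
Hypothesis C_in_S : forall q, exists l, col q C \in S l.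
Hypotheses (P_adj : adjmx conjf P = P) (PY : P *m Y = Y).
Hypothesis kerCP : forall z : 'cV[K]_k, C *m z = 0 -> P *m z = 0.

Let lab j := xchoose (W_in_S j).

Lemma col_in_lab j : col j W \in S (lab j).
Proof. exact: (xchooseP (W_in_S j)). Qed.

Lemma dotc_cross i j : lab i != lab j -> dotc (col i Y) (col j Y) = 0.
Proof.
pose f q := xchoose (C_in_S q).
have supp x q : f q != lab x -> col x Y q 0 = 0.
  apply: (fixed_vector_support dirS (fun q => xchooseP (C_in_S q)) P_adj kerCP).
    by rewrite -col_mulmx PY.
  by rewrite -col_mulmx CY col_in_lab.
move=> labij; rewrite /dotc big1 // => q _.
have [fqi|fqi] := eqVneq (f q) (lab i); last by rewrite supp // conj0 mul0r.
by rewrite (supp j) ?mulr0 // fqi.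
Qed.

Lemma dotc_diag_neq0 i : dotc (col i Y) (col i Y) != 0.
Proof.
have W_neq0 := generic_col_neq0 (S_neq0 (lab i)) (genS (lab i)).
apply: contra (W_neq0 i _) => [/eqP/dotc_eq0 Yi0|]; last first.
  by rewrite inE col_in_lab.
by rewrite -CY col_mulmx Yi0 mulmx0.
Qed.

Lemma similarity_expmx (Q : 'M[K]_n) t :
  (forall i j, 0 <= Q i j) -> Q^T = Q ->
  (forall i j, (Q i j == 0) = (dotc (col i Y) (col j Y) == 0)) ->
  (\max_(l < M) \dim (S l) <= t)%N -> similarity_matrix S W (Q ^+ t).
Proof.
move=> Q_ge0 Q_sym Q_dotc le_dmax_t.
have Q_diag i : Q i i != 0 by rewrite Q_dotc dotc_diag_neq0.
split=> [|i j]; first by rewrite trmxX Q_sym.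
split=> [Qtij | [l [Sli Slj]]].
  exists (lab i); split; first exact: col_in_lab.
  suff -> : lab i = lab j by apply: col_in_lab.
  apply/eqP; apply: contraNT Qtij => labij; apply/eqP.
  apply: (expmx_block _ _ labij) => u x /dotc_cross/eqP.
  by rewrite -Q_dotc => /eqP.
have Qd : (Q ^+ \dim (S l)) i j != 0.
  apply: (expmx_neq0_cluster Q_ge0 Q_diag (cl := [set x | col x W \in S l]));
    rewrite ?inE //.
  - move=> A sAcl leA x clAx.
    have [u Au] := generic_dominating CY LW (S_neq0 l) (genS l) sAcl leA clAx.
    by rewrite -Q_dotc; exists u.
  - move=> A A0 Acl.
    have [u Au [x clAx]] := generic_connected CY LW (S_neq0 l) (genS l) A0 Acl.
    by rewrite -Q_dotc; exists u => //; exists x.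
apply: (expmx_neq0_mono Q_ge0 Q_diag _ Qd).
exact: leq_trans (leq_bigmax (F := fun l => \dim (S l)) l) le_dmax_t.
Qed.

End Similarity.

Lemma theorem2_conj : theorem2_body conjf.
Proof.
move=> m n M S W r s k rI cJ S_neq0 indep rW W_in_S genS _ _ C R U rU Ud.
case=> UUdU UdUUd _ UdU_adj Y dmax Q HQ.
have [Q_ge0 Q_sym Q_dotc] := gram_bin_abs HQ.
pose Pr : 'M[K]_(s, m) := rowsub rI 1%:M.
pose Qc : 'M[K]_(n, k) := colsub cJ 1%:M.
have RE : R = Pr *m W by rewrite /R rowsubE.
have CE : C = W *m Qc by rewrite /C mulmx_colsub mulmx1.
have UE : U = Pr *m C.
  by rewrite /Pr -rowsubE; apply/matrixP=> i j; rewrite /U /C !mxE.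
apply: (@similarity_expmx _ _ _ _ S W S_neq0 _ W_in_S genS Y C (Ud *m Pr)
                          (Ud *m U)) => //.
- by rewrite directvE /= indep.
- have PrWQc : Pr *m W *m Qc = U by rewrite -mulmxA -CE UE.
  rewrite /Y CE RE mulmxA; apply: cur_decomposition; rewrite PrWQc //.
  by rewrite rU rW.
- by rewrite /Y RE mulmxA.
- by move=> q; rewrite col_colsub.
- by rewrite /Y mulmxA UdUUd.
- by move=> z Cz0; rewrite -mulmxA UE -mulmxA Cz0 !mulmx0.
Qed.

End Conjugation.

Theorem theorem2 :
  (forall R : rcfType, theorem2_body (K := R) id) /\
  (forall C : numClosedFieldType, theorem2_body (K := C) Num.conj).
Proof.
split=> [R | C]; apply: theorem2_conj => //.
- by move=> x; rewrite -expr2 sqr_ge0.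
- by move=> x /eqP; rewrite mulf_eq0 orbb => /eqP.
- exact: rmorphD.
- exact: rmorphM.
- exact: conjCK.
- by move=> x; rewrite mulrC mul_conjC_ge0.
- by move=> x /eqP; rewrite mulrC mul_conjC_eq0 => /eqP.
- exact: norm_conjC.
Qed.
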